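(* Let $\nu \geq 0$, $\alpha > -1$ and $c > 0$. For integers $k \geq 0$ define the moments $$\mu_k = \int_0^{\infty} x^{k+\alpha} e^{-cx}\,[J_{\nu}(x)+1]\, dx, \qquad \mu_{k,0} = \int_0^{\infty} x^{k+\alpha} e^{-cx} J_{\nu}(x)\, dx .$$ Then for all $k \geq 1$, $$\mu_{k+1} = \frac{1}{c^2+1}\left\{ c\,[2(k+\alpha)+1]\,\mu_k - [(k+\alpha)^2-\nu^2]\,\mu_{k-1} + \frac{\Gamma(k+\alpha)\,[(k+\alpha)^2+(k+\alpha)-c^2\nu^2]}{c^{k+\alpha+2}} \right\},$$ with $$\mu_0 = \mu_{0,0} + \frac{\Gamma(\alpha+1)}{c^{\alpha+1}}, \qquad \mu_1 = \mu_{1,0} + \frac{\Gamma(\alpha+2)}{c^{\alpha+2}}.$$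
   Context: $J_\nu$ is the Bessel function of the first kind of order $\nu$ and $\Gamma$ the Gamma function. *)

From Stdlib Require Import Reals.
From Coquelicot Require Import Coquelicot.
Open Scope R_scope.

Definition Gamma (s : R) : R :=
  RInt_gen (fun t => Rpower t (s - 1) * exp (- t))
           (at_right 0) (Rbar_locally p_infty).

Definition BesselJ (nu x : R) : R :=
  Rpower (x / 2) nu *
  Series (fun m : nat =>
            (-1) ^ m / (INR (Factorial.fact m) * Gamma (INR m + nu + 1)) * (x / 2) ^ (2 * m)).

Definition mu (nu alpha c : R) (k : nat) : R :=
  RInt_gen (fun x => Rpower x (INR k + alpha) * exp (- c * x) * (BesselJ nu x + 1))
           (at_right 0) (Rbar_locally p_infty).

Definition mu0 (nu alpha c : R) (k : nat) : R :=
  RInt_gen (fun x => Rpower x (INR k + alpha) * exp (- c * x) * BesselJ nu x)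
           (at_right 0) (Rbar_locally p_infty).

From Stdlib Require Import Reals Lra.
From Coquelicot Require Import Coquelicot.
Open Scope R_scope.

(* Since the integrand of mu_k is x^p e^(-cx) J_nu(x) + x^p e^(-cx) with p = k + alpha,
   mu_k = mu_(k,0) + Gamma(p+1) / c^(p+1) for every k.
   For the Bessel moments m(p) = int_0^oo x^p e^(-cx) J_nu(x) dx, two integrations by parts
   combined with Bessel's equation x^2 J'' + x J' + (x^2 - nu^2) J = 0 give, for s > 0,
     (c^2 + 1) m(s+1) - c (2s+1) m(s) + (s^2 - nu^2) m(s-1) = 0;
   the boundary terms vanish because J = O(x^nu) and J' = O(x^(nu-1)) at 0, while J and J'
   stay bounded at infinity since (J'^2 + J^2) e^(nu^2/x) is nonincreasing.  Adding the
   Gamma terms and using Gamma(s+1) = s Gamma(s) yields the recurrence for mu. *)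

Notation is_RInt_0_oo f l := (is_RInt_gen f (at_right 0) (Rbar_locally p_infty) l).

Lemma exp_le_exp (x y : R) : x <= y -> exp x <= exp y.
Proof.
  intros [Hlt| ->]; [left; apply exp_increasing, Hlt|right; reflexivity].
Qed.

Lemma Rpower_pos (x p : R) : 0 < Rpower x p.
Proof. apply exp_pos. Qed.

Lemma is_derive_Rpower (p x : R) : 0 < x ->
  is_derive (fun y => Rpower y p) x (p * Rpower x (p - 1)).
Proof. intros Hx. apply is_derive_Reals, derivable_pt_lim_power, Hx. Qed.

Lemma filterlim_exp_opp_p_infty (e : R) : 0 < e ->
  filterlim (fun x => exp (- e * x)) (Rbar_locally p_infty) (locally 0).
Proof.
  intros He. eapply filterlim_comp; [|exact is_lim_exp_m].
  assert (H := filterlim_Rbar_mult_l (- e) p_infty).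
  replace (Rbar_mult (- e) p_infty) with m_infty in H; [exact H|].
  simpl. destruct (Rle_dec 0 (- e)); [exfalso; lra|reflexivity].
Qed.

Lemma filterlim_Rpower_at_right_0 (p : R) : 0 < p ->
  filterlim (fun x => Rpower x p) (at_right 0) (locally 0).
Proof.
  intros Hp. eapply filterlim_comp; [|exact is_lim_exp_m].
  eapply filterlim_comp; [exact is_lim_ln_0|].
  assert (H := filterlim_Rbar_mult_l p m_infty).
  replace (Rbar_mult p m_infty) with m_infty in H; [exact H|].
  simpl. destruct (Rle_dec 0 p) as [Hp'|]; [|exfalso; lra].
  destruct (Rle_lt_or_eq_dec 0 p Hp'); [reflexivity|exfalso; lra].
Qed.

Lemma filterlim_Rmult_l {F : (R -> Prop) -> Prop} {FF : Filter F} (g : R -> R) (k l : R) :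
  filterlim g F (locally l) -> filterlim (fun x => k * g x) F (locally (k * l)).
Proof.
  intros H. eapply filterlim_comp; [exact H|]. apply (filterlim_Rbar_mult_l k l).
Qed.

Lemma filterlim_0_abs_le {F : (R -> Prop) -> Prop} {FF : Filter F} (f g : R -> R) :
  F (fun x => Rabs (f x) <= g x) -> filterlim g F (locally 0) -> filterlim f F (locally 0).
Proof.
  intros Hb Hg. apply (filterlim_locally (T := R_UniformSpace)). intros eps.
  apply (proj1 (filterlim_locally (T := R_UniformSpace) g 0)) with (eps := eps) in Hg.
  eapply filter_imp; [|exact (filter_and _ _ Hb Hg)].
  intros x [H1 H2]. change (Rabs (f x - 0) < eps). change (Rabs (g x - 0) < eps) in H2.
  rewrite Rminus_0_r in *. eapply Rle_lt_trans; [|exact H2].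
  eapply Rle_trans; [exact H1|apply Rle_abs].
Qed.

Lemma at_right_0_interval (d : R) : 0 < d -> at_right 0 (fun x => 0 < x < d).
Proof.
  intros Hd. exists (mkposreal _ Hd). intros y Hy Hy0. split; [exact Hy0|].
  change (Rabs (y - 0) < d) in Hy. apply Rabs_lt_between in Hy. lra.
Qed.

Lemma filter_prod_0_oo_pos :
  filter_prod (at_right 0) (Rbar_locally p_infty)
    (fun ab : R * R => forall x, Rmin (fst ab) (snd ab) <= x <= Rmax (fst ab) (snd ab) -> 0 < x).
Proof.
  apply Filter_prod with (Q := fun a => 0 < a) (R := fun b => 0 < b).
  - exists (mkposreal 1 Rlt_0_1). intros y _ Hy. exact Hy.
  - exists 0. intros y Hy. exact Hy.
  - intros a b Ha Hb x [Hx _]; cbn [fst snd] in Hx. eapply Rlt_le_trans; [|exact Hx].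
    unfold Rmin; destruct Rle_dec; lra.
Qed.

Lemma ex_RInt_continuous_pos (f : R -> R) (a b : R) :
  (forall x, 0 < x -> continuous f x) -> 0 < a -> 0 < b -> ex_RInt f a b.
Proof.
  intros Hc Ha Hb. apply (@ex_RInt_continuous R_CompleteNormedModule).
  intros z [Hz _]. apply Hc. eapply Rlt_le_trans; [|exact Hz].
  unfold Rmin; destruct Rle_dec; lra.
Qed.

Lemma RInt_abs_le_primitive (f g G : R -> R) (u v : R) :
  u <= v -> ex_RInt f u v ->
  (forall x, u <= x <= v -> is_derive G x (g x)) ->
  (forall x, u <= x <= v -> continuous g x) ->
  (forall x, u <= x <= v -> Rabs (f x) <= g x) ->
  Rabs (RInt f u v) <= G v - G u.
Proof.
  intros Huv Hf HG Hgc Hb.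
  assert (Hg : is_RInt g u v (G v - G u)).
  { apply (is_RInt_derive (V := R_CompleteNormedModule) G g);
      intros x Hx; [apply HG|apply Hgc]; unfold Rmin, Rmax in Hx; destruct Rle_dec; lra. }
  eapply Rle_trans; [apply abs_RInt_le; auto|].
  rewrite <- (is_RInt_unique _ _ _ _ Hg).
  apply RInt_le; auto.
  - apply ex_RInt_norm, Hf.
  - eexists; exact Hg.
  - intros x Hx. apply Hb. lra.
Qed.

(* Cauchy criterion: the increments of [b |-> RInt f 1 b] are controlled by those of [G]. *)
Lemma ex_lim_RInt_majorant (F : (R -> Prop) -> Prop) {FF : ProperFilter F}
  (f G : R -> R) (Q : R -> Prop) :
  (forall x, 0 < x -> continuous f x) ->
  F Q -> (forall u, Q u -> 0 < u) ->
  (forall u v, Q u -> Q v -> u <= v -> Rabs (RInt f u v) <= G v - G u) ->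
  (exists l, filterlim G F (locally l)) ->
  exists l, filterlim (fun b => RInt f 1 b) F (locally l).
Proof.
  intros Hc HQ HQpos Hb HG.
  apply (filterlim_locally_cauchy (U := R_CompleteSpace)).
  pose proof (proj2 (filterlim_locally_cauchy (U := R_CompleteSpace) (F := F) G) HG) as HGc.
  intros eps. destruct (HGc eps) as [P [HP HPb]].
  exists (fun x => P x /\ Q x). split; [now apply filter_and|].
  intros u v [Pu Qu] [Pv Qv].
  specialize (HPb u v Pu Pv). change (Rabs (G v - G u) < eps) in HPb.
  change (Rabs (RInt f 1 v - RInt f 1 u) < eps).
  assert (Hu := HQpos _ Qu). assert (Hv := HQpos _ Qv).
  assert (Chasles : RInt f 1 v - RInt f 1 u = RInt f u v).
  { rewrite <- (RInt_Chasles f 1 u v) by (apply ex_RInt_continuous_pos; auto; lra).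
    unfold plus; simpl. ring. }
  rewrite Chasles.
  destruct (Rle_dec u v) as [Huv|Huv].
  - eapply Rle_lt_trans; [apply Hb; auto|].
    eapply Rle_lt_trans; [apply Rle_abs|exact HPb].
  - rewrite <- (opp_RInt_swap (V := R_CompleteNormedModule)) by (apply ex_RInt_continuous_pos; auto).
    unfold opp; simpl; rewrite Rabs_Ropp.
    eapply Rle_lt_trans; [apply Hb; auto; lra|].
    rewrite <- Rabs_Ropp in HPb. replace (- (G v - G u)) with (G u - G v) in HPb by ring.
    eapply Rle_lt_trans; [apply Rle_abs|exact HPb].
Qed.

Lemma ex_lim_RInt_p_infty (f : R -> R) (C e : R) : 0 < e ->
  (forall x, 0 < x -> continuous f x) ->
  (forall x, 1 <= x -> Rabs (f x) <= C * exp (- e * x)) ->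
  exists l, filterlim (fun b => RInt f 1 b) (Rbar_locally p_infty) (locally l).
Proof.
  intros He Hc Hb.
  apply (ex_lim_RInt_majorant _ f (fun x => - C / e * exp (- e * x)) (fun x => 1 < x)); auto.
  - exists 1. auto.
  - intros; lra.
  - intros u v Hu Hv Huv.
    apply RInt_abs_le_primitive with (g := fun x => C * exp (- e * x))
      (G := fun x => - C / e * exp (- e * x)); auto.
    + apply ex_RInt_continuous_pos; auto; lra.
    + intros x _. auto_derive; auto. field. lra.
    + intros x _. apply (@ex_derive_continuous R_AbsRing R_NormedModule). auto_derive. auto.
    + intros x Hx. apply Hb. lra.
  - exists (- C / e * 0). apply filterlim_Rmult_l, filterlim_exp_opp_p_infty, He.
Qed.

Lemma ex_lim_RInt_at_right_0 (f : R -> R) (C b d : R) : -1 < b -> 0 < d ->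
  (forall x, 0 < x -> continuous f x) ->
  (forall x, 0 < x < d -> Rabs (f x) <= C * Rpower x b) ->
  exists l, filterlim (fun a => RInt f 1 a) (at_right 0) (locally l).
Proof.
  intros Hbt Hd Hc Hb.
  apply (ex_lim_RInt_majorant _ f (fun x => C / (b + 1) * Rpower x (b + 1)) (fun x => 0 < x < d)); auto.
  - apply at_right_0_interval, Hd.
  - intros; lra.
  - intros u v Hu Hv Huv.
    apply RInt_abs_le_primitive with (g := fun x => C * Rpower x b)
      (G := fun x => C / (b + 1) * Rpower x (b + 1)); auto.
    + apply ex_RInt_continuous_pos; auto; lra.
    + intros x Hx.
      replace (C * Rpower x b) with (C / (b + 1) * ((b + 1) * Rpower x (b + 1 - 1)))
        by (replace (b + 1 - 1) with b by ring; field; lra).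
      apply is_derive_scal with (f := fun y => Rpower y (b + 1)), is_derive_Rpower. lra.
    + intros x Hx. apply (@ex_derive_continuous R_AbsRing R_NormedModule).
      eexists. apply is_derive_scal with (f := fun y => Rpower y b), is_derive_Rpower. lra.
    + intros x Hx. apply Hb. lra.
  - exists (C / (b + 1) * 0). apply filterlim_Rmult_l, filterlim_Rpower_at_right_0. lra.
Qed.

Lemma is_RInt_gen_primitive (H h : R -> R) (la lb : R) :
  (forall x, 0 < x -> is_derive H x (h x)) ->
  (forall x, 0 < x -> continuous h x) ->
  filterlim H (at_right 0) (locally la) ->
  filterlim H (Rbar_locally p_infty) (locally lb) ->
  is_RInt_0_oo h (lb - la).
Proof.
  intros HD Hc Ha Hb.
  apply is_RInt_gen_ext with (f := Derive H).
  - eapply filter_imp; [|exact filter_prod_0_oo_pos]. intros ab Hab x Hx.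
    apply is_derive_unique, HD, Hab. lra.
  - apply is_RInt_gen_Derive; auto.
    + eapply filter_imp; [|exact filter_prod_0_oo_pos]. intros ab Hab x Hx.
      eexists. apply HD, Hab, Hx.
    + eapply filter_imp; [|exact filter_prod_0_oo_pos]. intros ab Hab x Hx.
      assert (Hx0 := Hab x Hx).
      apply continuous_ext_loc with (g := h); [|apply Hc, Hx0].
      assert (Hp : 0 < x / 2) by lra. exists (mkposreal _ Hp). intros y Hy.
      change (Rabs (y - x) < x / 2) in Hy. apply Rabs_lt_between in Hy.
      symmetry. apply is_derive_unique, HD. lra.
Qed.

Lemma is_RInt_gen_derive_vanishing (H h : R -> R) :
  (forall x, 0 < x -> is_derive H x (h x)) ->
  (forall x, 0 < x -> continuous h x) ->
  filterlim H (at_right 0) (locally 0) ->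
  filterlim H (Rbar_locally p_infty) (locally 0) ->
  is_RInt_0_oo h 0.
Proof.
  intros HD Hc Ha Hb. rewrite <- (Rminus_0_r 0) at 2.
  apply is_RInt_gen_primitive with (H := H); auto.
Qed.

Lemma ex_RInt_gen_0_oo (f : R -> R) (C b d C' e : R) :
  -1 < b -> 0 < d -> 0 < e ->
  (forall x, 0 < x -> continuous f x) ->
  (forall x, 0 < x < d -> Rabs (f x) <= C * Rpower x b) ->
  (forall x, 1 <= x -> Rabs (f x) <= C' * exp (- e * x)) ->
  exists l, is_RInt_0_oo f l.
Proof.
  intros Hb Hd He Hc H0 H1.
  destruct (ex_lim_RInt_at_right_0 f C b d Hb Hd Hc H0) as [la Ha].
  destruct (ex_lim_RInt_p_infty f C' e He Hc H1) as [lb Hlb].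
  exists (lb - la). apply is_RInt_gen_primitive with (H := fun y => RInt f 1 y); auto.
  intros x Hx. apply is_derive_RInt with (a := 1); [|now apply Hc].
  assert (Hp : 0 < x / 2) by lra.
  exists (mkposreal _ Hp). intros y Hy. apply (@RInt_correct R_CompleteNormedModule).
  change (Rabs (y - x) < x / 2) in Hy. apply Rabs_lt_between in Hy.
  apply ex_RInt_continuous_pos; auto; lra.
Qed.

Lemma is_RInt_gen_ext_pos (f g : R -> R) (l : R) :
  (forall x, 0 < x -> f x = g x) -> is_RInt_0_oo f l -> is_RInt_0_oo g l.
Proof.
  intros He. apply is_RInt_gen_ext.
  eapply filter_imp; [|exact filter_prod_0_oo_pos]. intros ab Hab x Hx.
  apply He, Hab. lra.
Qed.

Lemma is_RInt_gen_unique_pos (f g : R -> R) (l1 l2 : R) :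
  is_RInt_0_oo f l1 -> is_RInt_0_oo g l2 -> (forall x, 0 < x -> f x = g x) -> l1 = l2.
Proof.
  intros H1 H2 He. apply (is_RInt_gen_ext_pos _ _ _ He) in H1.
  rewrite <- (is_RInt_gen_unique (V := R_CompleteNormedModule) _ _ H1).
  exact (is_RInt_gen_unique (V := R_CompleteNormedModule) _ _ H2).
Qed.

Lemma is_RInt_gen_comp_scal (f : R -> R) (c l : R) : 0 < c ->
  is_RInt_0_oo f l -> is_RInt_0_oo (fun x => c * f (c * x)) l.
Proof.
  intros Hc H P HPl. destruct (H P HPl) as [Q R [eps HQ] [M HR] HQR].
  assert (Hp : 0 < eps / c) by (apply Rdiv_lt_0_compat; [apply cond_pos|exact Hc]).
  apply Filter_prod with (Q := fun a => Q (c * a)) (R := fun b => R (c * b)).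
  - exists (mkposreal _ Hp). intros y Hy Hy0. simpl in Hy.
    change (Rabs (y - 0) < eps / c) in Hy. rewrite Rminus_0_r, Rabs_pos_eq in Hy by lra.
    apply HQ; [|apply Rmult_lt_0_compat; auto].
    change (Rabs (c * y - 0) < eps). rewrite Rminus_0_r, Rabs_pos_eq by nra.
    apply Rmult_lt_compat_l with (r := c) in Hy; auto.
    replace (c * (eps / c)) with (pos eps) in Hy by (field; lra). exact Hy.
  - exists (M / c). intros x Hx. apply HR.
    apply Rmult_lt_compat_l with (r := c) in Hx; auto.
    replace (c * (M / c)) with M in Hx by (field; lra). exact Hx.
  - intros a b Ha Hb. destruct (HQR _ _ Ha Hb) as [y [Hy HPy]].
    exists y. split; auto. cbn [fst snd] in Hy |- *.
    apply (is_RInt_ext (fun x => scal c (f (c * x + 0)))).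
    + intros x _. rewrite Rplus_0_r. reflexivity.
    + apply (is_RInt_comp_lin (V := R_NormedModule)). rewrite !Rplus_0_r. exact Hy.
Qed.

Lemma is_RInt_gen_lincomb (f g : R -> R) (a b lf lg : R) :
  is_RInt_0_oo f lf -> is_RInt_0_oo g lg ->
  is_RInt_0_oo (fun x => a * f x + b * g x) (a * lf + b * lg).
Proof.
  intros Hf Hg.
  exact (is_RInt_gen_plus (V := R_NormedModule) _ _ _ _
           (is_RInt_gen_scal _ a _ Hf) (is_RInt_gen_scal _ b _ Hg)).
Qed.

Lemma Rpower_le_exp (p e : R) : 0 < e ->
  exists K, 0 < K /\ forall t, 1 <= t -> Rpower t p <= K * exp (e * t).
Proof.
  intros He. set (q := Rabs p + 1).
  assert (Hq : 0 < q) by (unfold q; assert (H := Rabs_pos p); lra).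
  set (a := e / q). assert (Ha : 0 < a) by (unfold a; apply Rdiv_lt_0_compat; auto).
  exists (exp (- q * (1 + ln a))). split; [apply exp_pos|].
  intros t Ht.
  assert (Hlnt : 0 <= ln t) by (rewrite <- ln_1; apply ln_le; lra).
  (* [ln y <= y - 1] at [y = a t] *)
  assert (Hln : ln a + ln t <= a * t - 1).
  { rewrite <- ln_mult, <- (ln_exp (a * t - 1)) by nra.
    apply ln_le; [nra|]. assert (H := exp_ineq1_le (a * t - 1)). lra. }
  assert (Hpq : p * ln t <= q * ln t).
  { apply Rmult_le_compat_r; auto. unfold q. assert (H := Rle_abs p). lra. }
  assert (He' : e = q * a) by (unfold a; field; lra).
  unfold Rpower. rewrite <- exp_plus. apply exp_le_exp. rewrite He'. nra.
Qed.

Lemma is_derive_Rpower_exp (a c x : R) : 0 < x ->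
  is_derive (fun y => Rpower y a * exp (- c * y)) x
    (a * Rpower x (a - 1) * exp (- c * x) - c * (Rpower x a * exp (- c * x))).
Proof.
  intros Hx.
  replace (a * Rpower x (a - 1) * exp (- c * x) - c * (Rpower x a * exp (- c * x)))
    with (plus (mult (a * Rpower x (a - 1)) (exp (- c * x))) (mult (Rpower x a) (- c * exp (- c * x))))
    by (unfold plus, mult; simpl; ring).
  apply (is_derive_mult (fun y => Rpower y a) (fun y => exp (- c * y))).
  - apply is_derive_Rpower, Hx.
  - auto_derive; auto. ring.
  - intros; apply Rmult_comm.
Qed.

Lemma continuous_Rpower_exp (a c x : R) : 0 < x ->
  continuous (fun y => Rpower y a * exp (- c * y)) x.
Proof.
  intros Hx. apply (@ex_derive_continuous R_AbsRing R_NormedModule).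
  eexists. apply is_derive_Rpower_exp, Hx.
Qed.

Lemma Rpower_exp_abs_le_at_0 (a c n M d x : R) (h : R -> R) : 0 < c -> 0 < x < d ->
  (forall y, 0 < y < d -> Rabs (h y) <= M * Rpower y n) ->
  Rabs (Rpower x a * exp (- c * x) * h x) <= M * Rpower x (a + n).
Proof.
  intros Hc Hx Hh.
  rewrite !Rabs_mult, (Rabs_pos_eq (Rpower x a)), (Rabs_pos_eq (exp _))
    by (left; apply exp_pos).
  assert (He : exp (- c * x) <= 1) by (rewrite <- exp_0; apply exp_le_exp; nra).
  assert (Hp := Rpower_pos x a). assert (Ha := Rabs_pos (h x)). assert (Hhx := Hh x Hx).
  rewrite Rpower_plus.
  apply Rle_trans with (Rpower x a * Rabs (h x)); [|nra].
  rewrite <- (Rmult_1_r (Rpower x a)) at 2. apply Rmult_le_compat_r; [lra|].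
  apply Rmult_le_compat_l; lra.
Qed.

Lemma Rpower_exp_abs_le_at_infty (a c M : R) (h : R -> R) : 0 < c ->
  (forall x, 1 <= x -> Rabs (h x) <= M) ->
  exists K, forall x, 1 <= x ->
    Rabs (Rpower x a * exp (- c * x) * h x) <= K * exp (- (c / 2) * x).
Proof.
  intros Hc Hh.
  destruct (Rpower_le_exp a (c / 2) ltac:(lra)) as [K [HK HKb]].
  exists (K * M). intros x Hx.
  rewrite !Rabs_mult, (Rabs_pos_eq (Rpower x a)), (Rabs_pos_eq (exp _))
    by (left; apply exp_pos).
  assert (Hg := HKb x Hx). assert (Hhx := Hh x Hx).
  assert (Ha := Rabs_pos (h x)). assert (He := exp_pos (- c * x)).
  assert (Hp := Rpower_pos x a).
  replace (K * M * exp (- (c / 2) * x)) with (K * exp (c / 2 * x) * exp (- c * x) * M)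
    by (replace (- (c / 2) * x) with (c / 2 * x + - c * x) by field;
        rewrite exp_plus; ring).
  apply Rmult_le_compat; [nra|lra| |lra].
  apply Rmult_le_compat_r; lra.
Qed.

Lemma ex_RInt_gen_Rpower_exp (a c n M0 M1 d : R) (h : R -> R) :
  0 < c -> -1 < a + n -> 0 < d ->
  (forall x, 0 < x -> continuous h x) ->
  (forall x, 0 < x < d -> Rabs (h x) <= M0 * Rpower x n) ->
  (forall x, 1 <= x -> Rabs (h x) <= M1) ->
  exists l, is_RInt_0_oo (fun x => Rpower x a * exp (- c * x) * h x) l.
Proof.
  intros Hc Han Hd Hhc H0 H1.
  destruct (Rpower_exp_abs_le_at_infty a c M1 h Hc H1) as [K HK].
  apply (ex_RInt_gen_0_oo _ M0 (a + n) d K (c / 2)); auto; try lra.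
  - intros x Hx. apply (continuous_mult (K := R_AbsRing) (fun y => Rpower y a * exp (- c * y)) h).
    + apply continuous_Rpower_exp, Hx.
    + apply Hhc, Hx.
  - intros x Hx. apply (Rpower_exp_abs_le_at_0 _ _ _ _ d); auto.
Qed.

Lemma filterlim_Rpower_exp_at_right_0 (a c n M d : R) (h : R -> R) :
  0 < c -> 0 < d -> 0 < a + n ->
  (forall x, 0 < x < d -> Rabs (h x) <= M * Rpower x n) ->
  filterlim (fun x => Rpower x a * exp (- c * x) * h x) (at_right 0) (locally 0).
Proof.
  intros Hc Hd Han Hh.
  apply filterlim_0_abs_le with (g := fun x => M * Rpower x (a + n)).
  - eapply filter_imp; [|exact (at_right_0_interval d Hd)].
    intros x Hx. apply (Rpower_exp_abs_le_at_0 _ _ _ _ d); auto.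
  - assert (L := filterlim_Rmult_l _ M _ (filterlim_Rpower_at_right_0 _ Han)).
    rewrite Rmult_0_r in L. exact L.
Qed.

Lemma filterlim_Rpower_exp_p_infty (a c M : R) (h : R -> R) : 0 < c ->
  (forall x, 1 <= x -> Rabs (h x) <= M) ->
  filterlim (fun x => Rpower x a * exp (- c * x) * h x) (Rbar_locally p_infty) (locally 0).
Proof.
  intros Hc Hh. destruct (Rpower_exp_abs_le_at_infty a c M h Hc Hh) as [K HK].
  apply filterlim_0_abs_le with (g := fun x => K * exp (- (c / 2) * x)).
  - exists 1. intros x Hx. apply HK. lra.
  - assert (L := filterlim_Rmult_l (F := Rbar_locally p_infty) _ K _
                   (filterlim_exp_opp_p_infty (c / 2) ltac:(lra))).
    rewrite Rmult_0_r in L. exact L.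
Qed.

Lemma is_RInt_gen_Gamma (s : R) : 0 < s ->
  is_RInt_0_oo (fun t => Rpower t (s - 1) * exp (- t)) (Gamma s).
Proof.
  intros Hs.
  destruct (ex_RInt_gen_Rpower_exp (s - 1) 1 0 1 1 1 (fun _ => 1)) as [l Hl]; try lra.
  - intros; apply continuous_const.
  - intros x Hx. rewrite Rpower_O, Rabs_R1 by lra. lra.
  - intros. rewrite Rabs_R1. lra.
  - assert (H : is_RInt_0_oo (fun t => Rpower t (s - 1) * exp (- t)) l).
    { eapply is_RInt_gen_ext_pos; [|exact Hl]. intros x _. simpl. ring_simplify (- (1) * x). ring. }
    unfold Gamma. rewrite (is_RInt_gen_unique (V := R_CompleteNormedModule) _ _ H). exact H.
Qed.

(* Integration by parts against [d/dt (t^s e^-t)], whose boundary terms vanish. *)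
Lemma Gamma_succ (s : R) : 0 < s -> Gamma (s + 1) = s * Gamma s.
Proof.
  intros Hs.
  assert (Hparts : is_RInt_0_oo
      (fun x => s * Rpower x (s - 1) * exp (- (1) * x) - 1 * (Rpower x s * exp (- (1) * x))) 0).
  { apply is_RInt_gen_derive_vanishing with (H := fun x => Rpower x s * exp (- (1) * x)).
    - intros x Hx. apply is_derive_Rpower_exp, Hx.
    - intros x Hx. apply (@ex_derive_continuous R_AbsRing R_NormedModule).
      unfold Rpower. auto_derive. auto.
    - apply (filterlim_ext (fun x => Rpower x s * exp (- (1) * x) * 1)); [intros; ring|].
      apply (filterlim_Rpower_exp_at_right_0 s 1 0 1 1); try lra.
      intros x Hx. rewrite Rpower_O, Rabs_R1 by lra. lra.
    - apply (filterlim_ext (fun x => Rpower x s * exp (- (1) * x) * 1)); [intros; ring|].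
      apply (filterlim_Rpower_exp_p_infty s 1 1); [lra|].
      intros. rewrite Rabs_R1. lra. }
  assert (Hcomb := is_RInt_gen_lincomb _ _ s (-1) _ _
                     (is_RInt_gen_Gamma s Hs) (is_RInt_gen_Gamma (s + 1) ltac:(lra))).
  assert (E : s * Gamma s + -1 * Gamma (s + 1) = 0).
  { apply (is_RInt_gen_unique_pos _ _ _ _ Hcomb Hparts).
    intros x _. simpl. replace (s + 1 - 1) with s by ring. ring_simplify (- (1) * x). ring. }
  lra.
Qed.

Lemma is_RInt_gen_Rpower_exp (a c : R) : -1 < a -> 0 < c ->
  is_RInt_0_oo (fun x => Rpower x a * exp (- c * x)) (Gamma (a + 1) / Rpower c (a + 1)).
Proof.
  intros Ha Hc.
  assert (H := is_RInt_gen_scal (V := R_NormedModule) (Fa := at_right 0)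
                 (Fb := Rbar_locally p_infty) _ (/ Rpower c (a + 1)) _
                 (is_RInt_gen_comp_scal _ _ _ Hc (is_RInt_gen_Gamma (a + 1) ltac:(lra)))).
  unfold scal in H; simpl in H; unfold mult in H; simpl in H.
  rewrite Rmult_comm in H. eapply is_RInt_gen_ext_pos; [|exact H].
  intros x Hx. simpl. replace (a + 1 - 1) with a by ring.
  rewrite <- Rpower_mult_distr by lra. rewrite Rpower_plus, Rpower_1 by lra.
  assert (Hp := Rpower_pos c a).
  replace (- (c * x)) with (- c * x) by ring. field. lra.
Qed.

Definition bessel_coef (nu : R) (m : nat) : R :=
  (-1) ^ m / (INR (Factorial.fact m) * Gamma (INR m + nu + 1)).

Lemma bessel_coef_S (nu : R) (m : nat) : 0 <= nu ->
  bessel_coef nu (S m) = - bessel_coef nu m / ((INR m + 1) * (INR m + nu + 1)).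
Proof.
  intros Hnu. unfold bessel_coef.
  rewrite fact_simpl, mult_INR, S_INR.
  replace (INR m + 1 + nu + 1) with ((INR m + nu + 1) + 1) by ring.
  rewrite Gamma_succ by (assert (H := pos_INR m); lra).
  unfold Rdiv. rewrite !Rinv_mult. simpl. ring.
Qed.

Lemma bessel_coef_abs_le (nu : R) (n : nat) : 0 <= nu ->
  Rabs (bessel_coef nu n) <= Rabs (bessel_coef nu 0) / INR (Factorial.fact n).
Proof.
  intros Hnu. induction n as [|n IH]; [simpl; lra|].
  rewrite bessel_coef_S, fact_simpl, mult_INR, S_INR by exact Hnu.
  assert (Hn := pos_INR n). assert (Hf := INR_fact_lt_0 n).
  unfold Rdiv. rewrite Rabs_mult, Rabs_Ropp, Rabs_inv, Rabs_mult, !Rinv_mult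
    by (apply Rmult_integral_contrapositive_currified; lra).
  rewrite (Rabs_pos_eq (INR n + 1)), (Rabs_pos_eq (INR n + nu + 1)) by lra.
  assert (H1 : / (INR n + nu + 1) <= 1) by (rewrite <- Rinv_1; apply Rinv_le_contravar; lra).
  assert (H2 : 0 < / (INR n + 1)) by (apply Rinv_0_lt_compat; lra).
  assert (H3 := Rabs_pos (bessel_coef nu n)).
  unfold Rdiv in IH.
  apply Rle_trans with (Rabs (bessel_coef nu n) * / (INR n + 1)).
  - rewrite <- Rmult_assoc. rewrite <- (Rmult_1_r (_ * / (INR n + 1))) at 2.
    apply Rmult_le_compat_l; [apply Rmult_le_pos; lra|exact H1].
  - rewrite (Rmult_comm (/ _)), <- Rmult_assoc. apply Rmult_le_compat_r; lra.
Qed.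

Lemma pow_div_fact_le_exp (x : R) (n : nat) : 0 <= x -> x ^ n / INR (Factorial.fact n) <= exp x.
Proof.
  intros Hx. eapply Rle_trans; [|apply (exp_ge_taylor x n Hx)].
  destruct n as [|n]; [right; reflexivity|].
  cbn [sum_f_R0].
  assert (0 <= sum_f_R0 (fun k => x ^ k / INR (Factorial.fact k)) n); [|lra].
  apply cond_pos_sum. intros k. apply Rdiv_le_0_compat; [apply pow_le, Hx|apply INR_fact_lt_0].
Qed.

Lemma CV_radius_bessel_coef (nu : R) : 0 <= nu -> CV_radius (bessel_coef nu) = p_infty.
Proof.
  intros Hnu.
  assert (Hub : forall r : R, Rbar_le r (CV_radius (bessel_coef nu))).
  { intros r. apply (proj1 (CV_radius_bounded (bessel_coef nu))).
    exists (Rabs (bessel_coef nu 0) * exp (Rabs r)). intros n.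
    rewrite Rabs_mult, <- RPow_abs.
    eapply Rle_trans.
    { apply Rmult_le_compat_r; [apply pow_le, Rabs_pos|apply bessel_coef_abs_le, Hnu]. }
    unfold Rdiv. rewrite Rmult_assoc, (Rmult_comm (/ _)).
    apply Rmult_le_compat_l; [apply Rabs_pos|]. apply pow_div_fact_le_exp, Rabs_pos. }
  destruct (CV_radius (bessel_coef nu)) as [v| |] eqn:Hv; [|reflexivity|].
  - specialize (Hub (v + 1)). simpl in Hub. lra.
  - specialize (Hub 0). contradiction.
Qed.

Lemma bessel_series_ode (nu z : R) : 0 <= nu ->
  z * PSeries (PS_derive (PS_derive (bessel_coef nu))) z
    + (nu + 1) * PSeries (PS_derive (bessel_coef nu)) z + PSeries (bessel_coef nu) z = 0.
Proof.
  intros Hnu.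
  assert (Hex : forall a, CV_radius a = p_infty -> ex_pseries a z).
  { intros a Ha. apply CV_radius_inside. rewrite Ha. exact I. }
  assert (E0 := Hex _ (CV_radius_bessel_coef nu Hnu)).
  assert (E1 := Hex (PS_derive (bessel_coef nu))
                  ltac:(rewrite CV_radius_derive; apply CV_radius_bessel_coef, Hnu)).
  assert (E2 := Hex (PS_derive (PS_derive (bessel_coef nu)))
                  ltac:(rewrite !CV_radius_derive; apply CV_radius_bessel_coef, Hnu)).
  assert (F2 := ex_pseries_incr_1 _ z E2).
  assert (F1 : ex_pseries (PS_scal (nu + 1) (PS_derive (bessel_coef nu))) z).
  { apply (ex_pseries_scal (K := R_AbsRing)); [apply Rmult_comm|exact E1]. }
  rewrite <- PSeries_incr_1, <- PSeries_scal.
  rewrite <- (PSeries_plus _ _ z F2 F1), <- (PSeries_plus _ _ z (ex_pseries_plus _ _ _ F2 F1) E0).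
  rewrite <- (PSeries_const_0 z). apply PSeries_ext. intros n.
  unfold PS_plus, PS_scal, PS_incr_1, PS_derive.
  destruct n as [|k].
  - rewrite bessel_coef_S by exact Hnu.
    unfold zero, plus, scal, mult; simpl; unfold mult; simpl. field. lra.
  - assert (Hk := pos_INR k).
    rewrite (bessel_coef_S nu (S k)), !S_INR by exact Hnu.
    unfold zero, plus, scal, mult; simpl; unfold mult; simpl. field. lra.
Qed.

Lemma BesselJ_PSeries (nu x : R) :
  BesselJ nu x = Rpower (x / 2) nu * PSeries (bessel_coef nu) ((x / 2) ^ 2).
Proof.
  unfold BesselJ, PSeries. f_equal. apply Series_ext. intros n. rewrite pow_mult. reflexivity.
Qed.

Definition BesselJ' (nu x : R) : R :=
  Rpower (x / 2) nu * (nu / x * PSeries (bessel_coef nu) ((x / 2) ^ 2)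
                       + x / 2 * PSeries (PS_derive (bessel_coef nu)) ((x / 2) ^ 2)).

Lemma is_derive_PSeries_bessel_coef (nu z : R) : 0 <= nu ->
  is_derive (PSeries (bessel_coef nu)) z (PSeries (PS_derive (bessel_coef nu)) z).
Proof. intros Hnu. apply is_derive_PSeries. rewrite CV_radius_bessel_coef by exact Hnu. exact I. Qed.

Lemma is_derive_PSeries_derive_bessel_coef (nu z : R) : 0 <= nu ->
  is_derive (PSeries (PS_derive (bessel_coef nu))) z
    (PSeries (PS_derive (PS_derive (bessel_coef nu))) z).
Proof.
  intros Hnu. apply is_derive_PSeries.
  rewrite CV_radius_derive, CV_radius_bessel_coef by exact Hnu. exact I.
Qed.

Lemma is_derive_BesselJ (nu x : R) : 0 <= nu -> 0 < x ->
  is_derive (BesselJ nu) x (BesselJ' nu x).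
Proof.
  intros Hnu Hx.
  apply is_derive_ext with (f := fun t => Rpower (t / 2) nu * PSeries (bessel_coef nu) ((t / 2) ^ 2)).
  { intros t. symmetry. apply BesselJ_PSeries. }
  unfold BesselJ', Rpower. auto_derive.
  - repeat split; try lra. eexists; apply is_derive_PSeries_bessel_coef, Hnu.
  - rewrite (is_derive_unique _ _ _ (is_derive_PSeries_bessel_coef nu _ Hnu)). unfold Rdiv.
    replace (x * / 2 * (x * / 2 * 1)) with ((x * / 2) ^ 2) by ring. field. lra.
Qed.

(* The series ODE turns the second derivative into Bessel's equation
   [x^2 J'' + x J' + (x^2 - nu^2) J = 0]. *)
Lemma is_derive_BesselJ' (nu x : R) : 0 <= nu -> 0 < x ->
  is_derive (BesselJ' nu) x ((nu ^ 2 / x ^ 2 - 1) * BesselJ nu x - BesselJ' nu x / x).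
Proof.
  intros Hnu Hx.
  assert (Hode := bessel_series_ode nu ((x / 2) ^ 2) Hnu).
  unfold BesselJ', Rpower. rewrite BesselJ_PSeries. unfold Rpower. auto_derive.
  - repeat split; try lra; eexists;
      [apply is_derive_PSeries_bessel_coef, Hnu|apply is_derive_PSeries_derive_bessel_coef, Hnu].
  - rewrite (is_derive_unique _ _ _ (is_derive_PSeries_bessel_coef nu _ Hnu)).
    rewrite (is_derive_unique _ _ _ (is_derive_PSeries_derive_bessel_coef nu _ Hnu)).
    replace (x * / 2 * (x * / 2 * 1)) with ((x / 2) ^ 2) by (unfold Rdiv; ring).
    set (P0 := PSeries (bessel_coef nu) ((x / 2) ^ 2)) in *.
    set (P1 := PSeries (PS_derive (bessel_coef nu)) ((x / 2) ^ 2)) in *.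
    set (P2 := PSeries (PS_derive (PS_derive (bessel_coef nu))) ((x / 2) ^ 2)) in *.
    assert (Hz : (x / 2) ^ 2 <> 0) by (apply pow_nonzero; lra).
    assert (E2 : P2 = - ((nu + 1) * P1 + P0) / (x / 2) ^ 2).
    { apply Rmult_eq_reg_l with ((x / 2) ^ 2); [|exact Hz]. field_simplify; [lra|lra]. }
    rewrite E2. unfold Rdiv. field. lra.
Qed.

Lemma continuous_abs_le_near (f : R -> R) (x0 : R) : continuous f x0 ->
  exists d, 0 < d /\ forall z, Rabs (z - x0) < d -> Rabs (f z) <= Rabs (f x0) + 1.
Proof.
  intros Hc. apply continuity_pt_filterlim in Hc. rewrite continuity_pt_locally in Hc.
  destruct (Hc (mkposreal 1 Rlt_0_1)) as [d Hd].
  exists d. split; [apply cond_pos|]. intros z Hz.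
  assert (H := Hd z Hz). change (Rabs (f z - f x0) < 1) in H.
  assert (H2 := Rabs_triang_inv (f z) (f x0)). lra.
Qed.

Lemma PSeries_bessel_coef_abs_le_near_0 (nu : R) : 0 <= nu ->
  exists d A, 0 < d /\ 0 < A /\ forall z, Rabs z < d ->
    Rabs (PSeries (bessel_coef nu) z) <= A /\
    Rabs (PSeries (PS_derive (bessel_coef nu)) z) <= A.
Proof.
  intros Hnu.
  set (P0 := PSeries (bessel_coef nu)). set (P1 := PSeries (PS_derive (bessel_coef nu))).
  destruct (continuous_abs_le_near P0 0) as [d0 [Hd0 H0]].
  { apply (@ex_derive_continuous R_AbsRing R_NormedModule).
    eexists; apply is_derive_PSeries_bessel_coef, Hnu. }
  destruct (continuous_abs_le_near P1 0) as [d1 [Hd1 H1]].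
  { apply (@ex_derive_continuous R_AbsRing R_NormedModule).
    eexists; apply is_derive_PSeries_derive_bessel_coef, Hnu. }
  assert (HP0 := Rabs_pos (P0 0)). assert (HP1 := Rabs_pos (P1 0)).
  exists (Rmin d0 d1), (Rabs (P0 0) + 1 + (Rabs (P1 0) + 1)).
  split; [apply Rmin_glb_lt; auto|split; [lra|]].
  intros z Hz. rewrite <- (Rminus_0_r z) in Hz.
  assert (B0 := H0 z (Rlt_le_trans _ _ _ Hz (Rmin_l _ _))).
  assert (B1 := H1 z (Rlt_le_trans _ _ _ Hz (Rmin_r _ _))).
  split; lra.
Qed.

Lemma BesselJ_abs_le_at_0 (nu : R) : 0 <= nu -> exists d M, 0 < d /\ forall x, 0 < x < d ->
  Rabs (BesselJ nu x) <= M * Rpower x nu /\ Rabs (BesselJ' nu x) <= M * Rpower x (nu - 1).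
Proof.
  intros Hnu. destruct (PSeries_bessel_coef_abs_le_near_0 nu Hnu) as [d [A [Hd [HA HP]]]].
  exists (Rmin 1 d), ((nu + 1) * A). split; [apply Rmin_glb_lt; lra|].
  intros x [Hx Hxd].
  assert (Hx1 := Rlt_le_trans _ _ _ Hxd (Rmin_l _ _)).
  assert (Hxd' := Rlt_le_trans _ _ _ Hxd (Rmin_r _ _)).
  set (z := (x / 2) ^ 2).
  assert (Hz : Rabs z < d) by (unfold z; rewrite Rabs_pos_eq by nra; nra).
  destruct (HP z Hz) as [B0 B1].
  assert (Hhalf : Rpower (x / 2) nu <= Rpower x nu) by (apply Rle_Rpower_l; lra).
  assert (Hsplit : Rpower x nu = Rpower x (nu - 1) * x).
  { rewrite <- (Rpower_1 x) at 3 by lra. rewrite <- Rpower_plus. f_equal. ring. }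
  assert (Hpos := Rpower_pos (x / 2) nu). assert (Hpos' := Rpower_pos x (nu - 1)).
  rewrite BesselJ_PSeries. unfold BesselJ'. fold z.
  rewrite !Rabs_mult, Rabs_pos_eq by lra. split.
  - apply Rle_trans with (Rpower x nu * A); [apply Rmult_le_compat; try lra; apply Rabs_pos|].
    assert (Hxnu := Rpower_pos x nu).
    assert (0 <= nu * (A * Rpower x nu)) by (apply Rmult_le_pos; nra). nra.
  - set (P0 := PSeries (bessel_coef nu) z) in *.
    set (P1 := PSeries (PS_derive (bessel_coef nu)) z) in *.
    assert (Hsum : Rabs (nu / x * P0 + x / 2 * P1) <= nu / x * A + x / 2 * A).
    { eapply Rle_trans; [apply Rabs_triang|]. rewrite !Rabs_mult.
      rewrite (Rabs_pos_eq (nu / x)), (Rabs_pos_eq (x / 2)) by (try apply Rdiv_le_0_compat; lra).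
      apply Rplus_le_compat; apply Rmult_le_compat_l; try lra. apply Rdiv_le_0_compat; lra. }
    apply Rle_trans with (Rpower x nu * (nu / x * A + x / 2 * A));
      [apply Rmult_le_compat; try lra; apply Rabs_pos|].
    rewrite Hsplit.
    replace (Rpower x (nu - 1) * x * (nu / x * A + x / 2 * A))
      with (Rpower x (nu - 1) * A * (nu + x * x / 2)) by (field; lra).
    replace ((nu + 1) * A * Rpower x (nu - 1)) with (Rpower x (nu - 1) * A * (nu + 1)) by ring.
    apply Rmult_le_compat_l; [apply Rmult_le_pos; lra|nra].
Qed.

(* A Lyapunov function for Bessel's equation; its decay bounds J and J' at infinity. *)
Definition bessel_energy (nu x : R) : R :=
  (BesselJ' nu x ^ 2 + BesselJ nu x ^ 2) * exp (nu ^ 2 / x).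

Lemma is_derive_bessel_energy (nu x : R) : 0 <= nu -> 0 < x ->
  is_derive (bessel_energy nu) x
    (- exp (nu ^ 2 / x) * (2 * BesselJ' nu x ^ 2 / x
                           + nu ^ 2 * (BesselJ' nu x - BesselJ nu x) ^ 2 / x ^ 2)).
Proof.
  intros Hnu Hx. unfold bessel_energy. auto_derive.
  - repeat split; try lra; eexists; [apply is_derive_BesselJ'|apply is_derive_BesselJ]; auto.
  - replace (Derive (fun y => BesselJ' nu y) x) with ((nu ^ 2 / x ^ 2 - 1) * BesselJ nu x - BesselJ' nu x / x)
      by (symmetry; apply is_derive_unique, is_derive_BesselJ'; auto).
    replace (Derive (fun y => BesselJ nu y) x) with (BesselJ' nu x)
      by (symmetry; apply is_derive_unique, is_derive_BesselJ; auto).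
    replace (nu * (nu * 1) * / x) with (nu ^ 2 / x) by (unfold Rdiv; ring).
    field. lra.
Qed.

Lemma bessel_energy_le (nu x : R) : 0 <= nu -> 1 <= x -> bessel_energy nu x <= bessel_energy nu 1.
Proof.
  intros Hnu Hx. destruct (Rle_lt_or_eq_dec _ _ Hx) as [Hx'|<-]; [|lra].
  set (dE := fun y => - exp (nu ^ 2 / y) * (2 * BesselJ' nu y ^ 2 / y
                        + nu ^ 2 * (BesselJ' nu y - BesselJ nu y) ^ 2 / y ^ 2)).
  destruct (MVT_gen (bessel_energy nu) 1 x dE) as [y [Hy E]].
  - intros y Hy. rewrite Rmin_left, Rmax_right in Hy by lra.
    apply is_derive_bessel_energy; auto; lra.
  - intros y Hy. rewrite Rmin_left, Rmax_right in Hy by lra.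
    apply continuity_pt_filterlim, (@ex_derive_continuous R_AbsRing R_NormedModule).
    eexists. apply is_derive_bessel_energy; auto; lra.
  - rewrite Rmin_left, Rmax_right in Hy by lra.
    assert (HdE : dE y <= 0).
    { unfold dE. assert (He := exp_pos (nu ^ 2 / y)).
      assert (0 <= 2 * BesselJ' nu y ^ 2 / y)
        by (apply Rdiv_le_0_compat; [assert (H := pow2_ge_0 (BesselJ' nu y)); lra|lra]).
      assert (0 <= nu ^ 2 * (BesselJ' nu y - BesselJ nu y) ^ 2 / y ^ 2)
        by (apply Rdiv_le_0_compat; [apply Rmult_le_pos; apply pow2_ge_0|apply pow_lt; lra]).
      nra. }
    assert (dE y * (x - 1) <= 0) by (apply Rmult_le_0_r; lra).
    lra.
Qed.

Lemma BesselJ_abs_le_at_infty (nu : R) : 0 <= nu -> exists M, forall x, 1 <= x ->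
  Rabs (BesselJ nu x) <= M /\ Rabs (BesselJ' nu x) <= M.
Proof.
  intros Hnu. exists (1 + bessel_energy nu 1). intros x Hx.
  assert (HE := bessel_energy_le nu x Hnu Hx).
  assert (Hexp : 1 <= exp (nu ^ 2 / x)).
  { rewrite <- exp_0. apply exp_le_exp, Rdiv_le_0_compat; [apply pow2_ge_0|lra]. }
  assert (H1 := pow2_ge_0 (BesselJ' nu x)). assert (H2 := pow2_ge_0 (BesselJ nu x)).
  assert (Hsq : BesselJ' nu x ^ 2 + BesselJ nu x ^ 2 <= bessel_energy nu x)
    by (unfold bessel_energy; nra).
  assert (Habs : forall y, Rabs y <= 1 + y ^ 2).
  { intros y. destruct (Rle_dec 0 y); [rewrite Rabs_pos_eq|rewrite Rabs_left]; nra. }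
  assert (A1 := Habs (BesselJ' nu x)). assert (A2 := Habs (BesselJ nu x)).
  split; lra.
Qed.

Definition bessel_moment (nu c p : R) : R :=
  RInt_gen (fun x => Rpower x p * exp (- c * x) * BesselJ nu x) (at_right 0) (Rbar_locally p_infty).

Lemma continuous_BesselJ (nu x : R) : 0 <= nu -> 0 < x -> continuous (BesselJ nu) x.
Proof.
  intros Hnu Hx. apply (@ex_derive_continuous R_AbsRing R_NormedModule).
  eexists. apply is_derive_BesselJ; auto.
Qed.

Lemma is_RInt_gen_bessel_moment (nu c p : R) : 0 <= nu -> 0 < c -> -1 < p ->
  is_RInt_0_oo (fun x => Rpower x p * exp (- c * x) * BesselJ nu x) (bessel_moment nu c p).
Proof.
  intros Hnu Hc Hp.
  destruct (BesselJ_abs_le_at_0 nu Hnu) as [d [M [Hd H0]]].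
  destruct (BesselJ_abs_le_at_infty nu Hnu) as [M' Hoo].
  destruct (ex_RInt_gen_Rpower_exp p c nu M M' d (BesselJ nu)) as [l Hl]; auto; try lra.
  - intros x Hx. apply continuous_BesselJ; auto.
  - intros x Hx. apply H0, Hx.
  - intros x Hx. apply Hoo, Hx.
  - unfold bessel_moment. rewrite (is_RInt_gen_unique (V := R_CompleteNormedModule) _ _ Hl). exact Hl.
Qed.

Lemma bessel_parts_factor_abs_le_at_0 (nu c s : R) : 0 <= nu -> 0 <= c -> 0 <= s ->
  exists d M, 0 < d /\ forall x, 0 < x < d ->
    Rabs (BesselJ' nu x + (c - s / x) * BesselJ nu x) <= M * Rpower x (nu - 1).
Proof.
  intros Hnu Hc Hs. destruct (BesselJ_abs_le_at_0 nu Hnu) as [d [M [Hd H0]]].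
  exists (Rmin d 1), ((1 + c + s) * M). split; [apply Rmin_glb_lt; lra|].
  intros x [Hx Hxd].
  assert (Hx1 := Rlt_le_trans _ _ _ Hxd (Rmin_r _ _)).
  destruct (H0 x (conj Hx (Rlt_le_trans _ _ _ Hxd (Rmin_l _ _)))) as [BJ BJ'].
  assert (HM : 0 <= M).
  { apply Rmult_le_reg_r with (Rpower x nu); [apply Rpower_pos|].
    rewrite Rmult_0_l. eapply Rle_trans; [apply Rabs_pos|exact BJ]. }
  assert (Hsplit : Rpower x nu = Rpower x (nu - 1) * x).
  { rewrite <- (Rpower_1 x) at 3 by lra. rewrite <- Rpower_plus. f_equal. ring. }
  assert (Hp := Rpower_pos x (nu - 1)).
  assert (Hcoef : Rabs (c - s / x) <= c + s / x).
  { eapply Rle_trans; [apply Rabs_triang|]. rewrite Rabs_Ropp, Rabs_pos_eq, Rabs_pos_eq;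
      [lra|apply Rdiv_le_0_compat; lra|lra]. }
  assert (BcJ : Rabs (c - s / x) * Rabs (BesselJ nu x) <= M * Rpower x (nu - 1) * (c * x + s)).
  { eapply Rle_trans; [apply Rmult_le_compat; [apply Rabs_pos|apply Rabs_pos|exact Hcoef|exact BJ]|].
    rewrite Hsplit. right. field. lra. }
  assert (M * Rpower x (nu - 1) * (c * x + s) <= M * Rpower x (nu - 1) * (c + s))
    by (apply Rmult_le_compat_l; [apply Rmult_le_pos|]; nra).
  eapply Rle_trans; [apply Rabs_triang|]. rewrite Rabs_mult. nra.
Qed.

Lemma bessel_parts_factor_abs_le_at_infty (nu c s : R) : 0 <= nu -> 0 <= c -> 0 <= s ->
  exists M, forall x, 1 <= x -> Rabs (BesselJ' nu x + (c - s / x) * BesselJ nu x) <= M.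
Proof.
  intros Hnu Hc Hs. destruct (BesselJ_abs_le_at_infty nu Hnu) as [M HM].
  exists (M + (c + s) * M). intros x Hx. destruct (HM x Hx) as [BJ BJ'].
  assert (Hcoef : Rabs (c - s / x) <= c + s).
  { assert (s / x <= s) by (apply Rmult_le_reg_r with x; [lra|]; field_simplify; nra).
    eapply Rle_trans; [apply Rabs_triang|]. rewrite Rabs_Ropp, Rabs_pos_eq, Rabs_pos_eq;
      [lra|apply Rdiv_le_0_compat; lra|lra]. }
  assert (Rabs (c - s / x) * Rabs (BesselJ nu x) <= (c + s) * M)
    by (apply Rmult_le_compat; auto; apply Rabs_pos).
  eapply Rle_trans; [apply Rabs_triang|]. rewrite Rabs_mult. lra.
Qed.

(* Integration by parts twice: the integrand is minus the derivative of
   [x^(s+1) e^(-c x) (J' + (c - s/x) J)], which vanishes at both ends since s > 0. *)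
Lemma bessel_moment_parts (nu c s : R) : 0 <= nu -> 0 < c -> 0 < s ->
  is_RInt_0_oo (fun x => Rpower x (s + 1) * exp (- c * x) *
     (((s ^ 2 - nu ^ 2) / x ^ 2 - c * (2 * s + 1) / x + (c ^ 2 + 1)) * BesselJ nu x)) 0.
Proof.
  intros Hnu Hc Hs.
  set (h := fun x => - (BesselJ' nu x + (c - s / x) * BesselJ nu x)).
  apply is_RInt_gen_derive_vanishing with (H := fun x => Rpower x (s + 1) * exp (- c * x) * h x).
  - intros x Hx. unfold h, Rpower. auto_derive.
    + repeat split; try lra; eexists; [apply is_derive_BesselJ'|apply is_derive_BesselJ]; auto.
    + replace (Derive (fun y => BesselJ' nu y) x)
        with ((nu ^ 2 / x ^ 2 - 1) * BesselJ nu x - BesselJ' nu x / x)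
        by (symmetry; apply is_derive_unique, is_derive_BesselJ'; auto).
      replace (Derive (fun y => BesselJ nu y) x) with (BesselJ' nu x)
        by (symmetry; apply is_derive_unique, is_derive_BesselJ; auto).
      field. lra.
  - intros x Hx. apply (@ex_derive_continuous R_AbsRing R_NormedModule). unfold Rpower. auto_derive.
    repeat split; try nra. eexists; apply is_derive_BesselJ; auto.
  - destruct (bessel_parts_factor_abs_le_at_0 nu c s Hnu ltac:(lra) ltac:(lra)) as [d [M [Hd H0]]].
    apply (filterlim_Rpower_exp_at_right_0 _ _ (nu - 1) M d); auto; try lra.
    intros x Hx. unfold h. rewrite Rabs_Ropp. apply H0, Hx.
  - destruct (bessel_parts_factor_abs_le_at_infty nu c s Hnu ltac:(lra) ltac:(lra)) as [M HM].
    apply (filterlim_Rpower_exp_p_infty _ _ M); auto.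
    intros x Hx. unfold h. rewrite Rabs_Ropp. apply HM, Hx.
Qed.

Lemma bessel_moment_recurrence (nu c s : R) : 0 <= nu -> 0 < c -> 0 < s ->
  (c ^ 2 + 1) * bessel_moment nu c (s + 1) - c * (2 * s + 1) * bessel_moment nu c s
    + (s ^ 2 - nu ^ 2) * bessel_moment nu c (s - 1) = 0.
Proof.
  intros Hnu Hc Hs.
  assert (Hcomb := is_RInt_gen_lincomb _ _ 1 (s ^ 2 - nu ^ 2) _ _
    (is_RInt_gen_lincomb _ _ (c ^ 2 + 1) (- (c * (2 * s + 1))) _ _
       (is_RInt_gen_bessel_moment nu c (s + 1) Hnu Hc ltac:(lra))
       (is_RInt_gen_bessel_moment nu c s Hnu Hc ltac:(lra)))
    (is_RInt_gen_bessel_moment nu c (s - 1) Hnu Hc ltac:(lra))).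
  rewrite <- (is_RInt_gen_unique_pos _ _ _ _ Hcomb (bessel_moment_parts nu c s Hnu Hc Hs)); [ring|].
  intros x Hx.
  assert (R1 : Rpower x (s + 1) = Rpower x (s - 1) * x ^ 2).
  { replace (s + 1) with (s - 1 + 1 + 1) by ring. rewrite !Rpower_plus, Rpower_1 by lra. ring. }
  assert (R2 : Rpower x s = Rpower x (s - 1) * x).
  { replace s with (s - 1 + 1) at 1 by ring. rewrite Rpower_plus, Rpower_1 by lra. ring. }
  rewrite R1, R2. field. lra.
Qed.

Lemma mu0_eq_bessel_moment (nu alpha c : R) (k : nat) : 0 <= nu -> -1 < alpha -> 0 < c ->
  mu0 nu alpha c k = bessel_moment nu c (INR k + alpha).
Proof.
  intros Hnu Ha Hc. assert (Hk := pos_INR k). unfold mu0.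
  apply (is_RInt_gen_unique (V := R_CompleteNormedModule)).
  apply is_RInt_gen_bessel_moment; auto; lra.
Qed.

Lemma mu_eq_mu0 (nu alpha c : R) (k : nat) : 0 <= nu -> -1 < alpha -> 0 < c ->
  mu nu alpha c k = mu0 nu alpha c k + Gamma (INR k + alpha + 1) / Rpower c (INR k + alpha + 1).
Proof.
  intros Hnu Ha Hc. assert (Hk := pos_INR k).
  rewrite mu0_eq_bessel_moment, <- (Rmult_1_l (bessel_moment _ _ _)), <- (Rmult_1_l (_ / _))
    by assumption.
  unfold mu. apply (is_RInt_gen_unique (V := R_CompleteNormedModule)).
  eapply is_RInt_gen_ext_pos;
    [|exact (is_RInt_gen_lincomb _ _ 1 1 _ _
               (is_RInt_gen_bessel_moment nu c (INR k + alpha) Hnu Hc ltac:(lra))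
               (is_RInt_gen_Rpower_exp (INR k + alpha) c ltac:(lra) Hc))].
  intros x _. simpl. ring.
Qed.
Lemma bessel_moment_Gamma_recurrence (nu c s : R) : 0 <= nu -> 0 < c -> 0 < s ->
  bessel_moment nu c (s + 1) + Gamma (s + 1 + 1) / Rpower c (s + 1 + 1) =
    / (c ^ 2 + 1) *
    ( c * (2 * s + 1) * (bessel_moment nu c s + Gamma (s + 1) / Rpower c (s + 1))
      - (s ^ 2 - nu ^ 2) * (bessel_moment nu c (s - 1) + Gamma (s - 1 + 1) / Rpower c (s - 1 + 1))
      + Gamma s * (s ^ 2 + s - c ^ 2 * nu ^ 2) / Rpower c (s + 2) ).
Proof.
  intros Hnu Hc Hs.
  assert (Hrec := bessel_moment_recurrence nu c s Hnu Hc Hs).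
  replace (s - 1 + 1) with s by ring.
  rewrite (Gamma_succ (s + 1)), (Gamma_succ s) by lra.
  assert (Hc2 : Rpower c (s + 2) = Rpower c s * c ^ 2).
  { rewrite Rpower_plus. f_equal. replace 2 with (1 + 1) by ring. rewrite Rpower_plus, Rpower_1 by lra. ring. }
  replace (s + 1 + 1) with (s + 2) by ring.
  rewrite Hc2, Rpower_plus, Rpower_1 by lra.
  assert (Hp := Rpower_pos c s).
  assert (Hc1 : c ^ 2 + 1 <> 0) by nra.
  assert (Hsolve : bessel_moment nu c (s + 1) =
    (c * (2 * s + 1) * bessel_moment nu c s - (s ^ 2 - nu ^ 2) * bessel_moment nu c (s - 1))
      / (c ^ 2 + 1)).
  { apply Rmult_eq_reg_l with (c ^ 2 + 1); [|exact Hc1]. field_simplify; [lra|exact Hc1]. }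
  rewrite Hsolve. field. repeat split; lra.
Qed.

Theorem proposition3 (nu alpha c : R) (hnu : 0 <= nu) (halpha : -1 < alpha) (hc : 0 < c) :
  (forall k : nat, (1 <= k)%nat ->
     mu nu alpha c (S k) =
       / (c ^ 2 + 1) *
       ( c * (2 * (INR k + alpha) + 1) * mu nu alpha c k
         - ((INR k + alpha) ^ 2 - nu ^ 2) * mu nu alpha c (k - 1)
         + Gamma (INR k + alpha) * ((INR k + alpha) ^ 2 + (INR k + alpha) - c ^ 2 * nu ^ 2)
             / Rpower c (INR k + alpha + 2) ))
  /\ mu nu alpha c 0 = mu0 nu alpha c 0 + Gamma (alpha + 1) / Rpower c (alpha + 1)
  /\ mu nu alpha c 1 = mu0 nu alpha c 1 + Gamma (alpha + 2) / Rpower c (alpha + 2).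
Proof.
  split; [|split].
  - intros k Hk.
    rewrite !mu_eq_mu0, !mu0_eq_bessel_moment by assumption.
    rewrite S_INR, minus_INR by exact Hk.
    assert (Hs : 0 < INR k + alpha) by (apply le_INR in Hk; simpl in Hk; lra).
    replace (INR k + 1 + alpha) with (INR k + alpha + 1) by ring.
    replace (INR k - INR 1 + alpha) with (INR k + alpha - 1) by (simpl; ring).
    apply bessel_moment_Gamma_recurrence; assumption.
  - rewrite mu_eq_mu0 by assumption. simpl INR. rewrite Rplus_0_l. reflexivity.
  - rewrite mu_eq_mu0 by assumption. simpl INR. replace (1 + alpha + 1) with (alpha + 2) by ring.
    reflexivity.
Qed.
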